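(* Fractional weak stability does not imply ex-post weak stability: there exist a set $N$ of $n$ agents and a set $O$ of $n$ objects, with weak preferences $\succsim_i$ over $O$ ($i\in N$) and weak priorities $\succsim_o$ over $N$ ($o\in O$), and a random matching $p$ that is fractionally weakly stable but not ex-post weakly stable.
   Context: Preferences $\succsim_i$ and priorities $\succsim_o$ are weak orders (complete and transitive), with strict parts $\succ_i,\succ_o$. A random matching is an $n\times n$ bistochastic matrix $p=[p(i,o)]_{i\in N,o\in O}$ (nonnegative entries, every row and every column summing to $1$); it is deterministic if all entries lie in $\{0,1\}$. A deterministic matching $p$ is weakly stable if there exist no $i,j\in N$, $o,o'\in O$ with $p(i,o')=1$, $p(j,o)=1$, $o\succ_i o'$ and $i\succ_o j$. A random matching is ex-post weakly stable if it can be written as $\sum_{j=1}^k\lambda_jP_j$ with each $P_j$ a weakly stable deterministic matching, $\lambda_j\in(0,1]$, $\sum_j\lambda_j=1$. It is fractionally weakly stable if for every $(i,o)\in N\times O$, $\sum_{o':o'\succsim_i o,\,o'\neq o}p(i,o')\ge\sum_{j:i\succ_o j}p(j,o)$. *)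

From HB Require Import structures.
From mathcomp Require Import all_boot all_order all_algebra.
From mathcomp Require Import Rstruct.
Set Implicit Arguments. Unset Strict Implicit. Unset Printing Implicit Defensive.
Import Order.TTheory GRing.Theory Num.Theory.
Local Open Scope ring_scope.

Notation R := Rdefinitions.R.

(* Agents N and objects O are both indexed by 'I_n.
   A weak order is given by a relation r with r a b meaning "a ≿ b". *)
Definition weak_order (T : Type) (r : rel T) : Prop :=
  (forall a b, r a b || r b a) /\ (forall a b c, r a b -> r b c -> r a c).

Definition strict (T : Type) (r : rel T) (a b : T) : bool := r a b && ~~ r b a.

(* bistochastic n x n matrix, indexed [agent, object] *)
Definition bistochastic (n : nat) (p : 'M[R]_n) : Prop :=
  (forall i o, 0 <= p i o) /\
  (forall i, \sum_(o < n) p i o = 1) /\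
  (forall o, \sum_(i < n) p i o = 1).

Definition deterministic (n : nat) (p : 'M[R]_n) : Prop :=
  bistochastic p /\ (forall i o, p i o = 0 \/ p i o = 1).

(* pref i : preference of agent i over objects; prio o : priority of object o over agents *)
Definition weakly_stable (n : nat) (pref : 'I_n -> rel 'I_n)
  (prio : 'I_n -> rel 'I_n) (p : 'M[R]_n) : Prop :=
  deterministic p /\
  ~ (exists (i j o o' : 'I_n),
       [/\ p i o' = 1, p j o = 1, strict (pref i) o o' & strict (prio o) i j]).

Definition ex_post_weakly_stable (n : nat) (pref : 'I_n -> rel 'I_n)
  (prio : 'I_n -> rel 'I_n) (p : 'M[R]_n) : Prop :=
  exists (k : nat) (lam : 'I_k -> R) (P : 'I_k -> 'M[R]_n),
    [/\ (forall j, weakly_stable pref prio (P j)),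
        (forall j, 0 < lam j <= 1),
        \sum_(j < k) lam j = 1
      & p = \sum_(j < k) lam j *: P j].

Definition fractionally_weakly_stable (n : nat) (pref : 'I_n -> rel 'I_n)
  (prio : 'I_n -> rel 'I_n) (p : 'M[R]_n) : Prop :=
  forall i o : 'I_n,
    \sum_(o' < n | pref i o' o && (o' != o)) p i o'
      >= \sum_(j < n | strict (prio o) i j) p j o.

(** Agent 0 prefers objects 0 and 1 (tied)
    to object 2, object 0 ranks the agents 1 > 0 > 2, and all other
    preferences and priorities are complete indifference.  Let p give each
    agent probability 1/2 on each of two objects, agent 0 getting {1, 2},
    agent 1 getting {0, 1} and agent 2 getting {0, 2}.  The only blocking
    constraints come from object 0 and are met fractionally.  But any
    decomposition of p into deterministic matchings uses one where agent 0
    gets object 2; there agent 2, who never gets object 1, must get object 0,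
    and agent 0 and object 0 block it. *)
From HB Require Import structures.
From mathcomp Require Import all_boot all_order all_algebra.
From mathcomp Require Import Rstruct.
From mathcomp Require Import lra.
Import Order.TTheory GRing.Theory Num.Theory.
Local Open Scope ring_scope.

Definition rank_rel {T : Type} (rank : T -> nat) : rel T :=
  fun x y => (rank x <= rank y)%N.

Lemma weak_order_rank {T : Type} (rank : T -> nat) : weak_order (rank_rel rank).
Proof. by split=> [x y | x y z]; [exact: leq_total | exact: leq_trans]. Qed.

Lemma deterministic_row_one {n : nat} {P : 'M[R]_n} (i : 'I_n) :
  deterministic P -> exists o, P i o = 1.
Proof.
move=> [[_ [rowP _]] P01].
have [/existsP [o /eqP Pio] | /existsPn noP] := boolP [exists o, P i o == 1].
  by exists o.
move: (rowP i); rewrite big1 => [|o _]; first by move/esym/eqP; rewrite oner_eq0.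
by case: (P01 i o) => // Pio; move: (noP o); rewrite Pio eqxx.
Qed.

Lemma deterministic_col_unique {n : nat} {P : 'M[R]_n} {i j o : 'I_n} :
  deterministic P -> P i o = 1 -> j != i -> P j o = 0.
Proof.
move=> [[P_ge0 [_ colP]] _] Pio ji.
have rest0 : \sum_(k < n | k != i) P k o = 0.
  by apply: (addrI 1); move: (colP o); rewrite (bigD1 i) //= Pio addr0.
exact: psumr_eq0P rest0 j ji.
Qed.

Lemma ex_post_support_matching {n : nat} {pref prio : 'I_n -> rel 'I_n}
    {p : 'M[R]_n} (i o : 'I_n) :
  ex_post_weakly_stable pref prio p -> p i o != 0 ->
  exists P, [/\ weakly_stable pref prio P, P i o = 1
              & forall i' o', p i' o' = 0 -> P i' o' = 0].
Proof.
move=> [k [lam [P [P_stable lam_range _ ->]]]].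
have entryE a b : (\sum_(j < k) lam j *: P j) a b = \sum_(j < k) lam j * P j a b.
  by rewrite summxE; apply: eq_bigr => j _; rewrite mxE.
have P_det j : deterministic (P j) by case: (P_stable j).
have lam_gt0 j : 0 < lam j by case/andP: (lam_range j).
rewrite entryE => p_io.
have [/existsP [j /eqP Pjio] | /existsPn noP] := boolP [exists j, P j i o == 1].
  exists (P j); split=> // a b; rewrite entryE => /psumr_eq0P term0.
  have /eqP : lam j * P j a b = 0.
    apply: term0 => // j' _; apply: mulr_ge0; first exact: ltW.
    by case: (P_det j') => -[].
  by rewrite mulf_eq0 (gt_eqF (lam_gt0 j)) => /eqP.
case/eqP: p_io; apply: big1 => j _.
have [_ P01] := P_det j.
by case: (P01 i o) => Pjio; [rewrite Pjio mulr0 | move: (noP j); rewrite Pjio eqxx].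
Qed.

Definition example_pref (i : 'I_3) : rel 'I_3 :=
  rank_rel (fun o : 'I_3 => (val i == 0%N) && (val o == 2%N)).

Definition example_prio (o : 'I_3) : rel 'I_3 :=
  rank_rel (fun i : 'I_3 => if val o == 0%N then index (val i) [:: 1; 0; 2]%N else 0%N).

Definition example_matching : 'M[R]_3 :=
  \matrix_(i, o) (if val o == nth 0%N [:: 0; 2; 1]%N i then 0 else 2^-1).

Lemma example_bistochastic : bistochastic example_matching.
Proof.
split; [|split].
- by move=> i o; rewrite mxE; case: ifP => _; lra.
- by case=> -[|[|[|?]]] //= ?; rewrite !big_ord_recl big_ord0 !mxE /=; lra.
- by case=> -[|[|[|?]]] //= ?; rewrite !big_ord_recl big_ord0 !mxE /=; lra.
Qed.

Lemma example_fractionally_stable :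
  fractionally_weakly_stable example_pref example_prio example_matching.
Proof.
case=> -[|[|[|?]]] //= ?; case=> -[|[|[|?]]] //= ?;
  by rewrite [X in X <= _]big_mkcond [X in _ <= X]big_mkcond
       !big_ord_recl !big_ord0 !mxE /=; lra.
Qed.

Lemma example_not_ex_post :
  ~ ex_post_weakly_stable example_pref example_prio example_matching.
Proof.
move=> /(ex_post_support_matching 0 2).
rewrite mxE /= invr_eq0 pnatr_eq0 => /(_ isT) [P [[P_det no_block] P02 supp]].
have [o P2o] := deterministic_row_one 2 P_det.
have : [|| o == 0, o == 1 | o == 2] by case: o {P2o} => -[|[|[|?]]].
case/or3P=> /eqP o_eq; rewrite {o}o_eq in P2o.
- by apply: no_block; exists 0, 2, 0, 2; split.
- by have := oner_neq0 R; rewrite -P2o supp ?mxE ?eqxx.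
- have P22 := deterministic_col_unique P_det P02 (isT : (2 : 'I_3) != 0).
  by have := oner_neq0 R; rewrite -P2o P22 eqxx.
Qed.

Theorem proposition17 :
  exists (n : nat) (pref : 'I_n -> rel 'I_n) (prio : 'I_n -> rel 'I_n)
         (p : 'M[Rdefinitions.R]_n),
    [/\ (forall i, weak_order (pref i)),
        (forall o, weak_order (prio o)),
        bistochastic p,
        fractionally_weakly_stable pref prio p
      & ~ ex_post_weakly_stable pref prio p].
Proof.
exists 3%N, example_pref, example_prio, example_matching; split.
- by move=> i; apply: weak_order_rank.
- by move=> o; apply: weak_order_rank.
- exact: example_bistochastic.
- exact: example_fractionally_stable.
- exact: example_not_ex_post.
Qed.
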